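(* Let $\rho$ be a congruence on a commutative semiring $A$. Then $\sqrt{\rho}$ is a congruence on $A$, and $(\sqrt{\rho})_+=\sqrt{\rho}$.
   Context: Semirings are commutative with $0$ and $1\neq0$, $0a=0$. A congruence is an equivalence relation $\rho$ on $A$ with $(a,b),(c,d)\in\rho\Rightarrow(a+c,b+d),(ac,bd)\in\rho$. Twisted product $(a,b)\ast(c,d)=(ac+bd,ad+bc)$, $(a,b)^{\ast1}=(a,b)$, $(a,b)^{\ast n}=(a,b)^{\ast(n-1)}\ast(a,b)$. For a relation $R$, $R_+=\{(a,b)\in A\times A:(a+c,b+c)\in R\ \text{for some}\ c\in A\}$. $\sqrt\rho=\{(a,b)\in A\times A:(a+c,b+c)^{\ast n}\in\rho\ \text{for some}\ c\in A,\ n\ge1\}$. *)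

(* Commutative semiring with 0, 1 <> 0 and 0a = 0:
   MathComp's comNzSemiRingType. Relations on A are A -> A -> Prop. *)
From mathcomp Require Import all_boot all_algebra.
Set Implicit Arguments. Unset Strict Implicit. Unset Printing Implicit Defensive.
Import GRing.Theory.
Local Open Scope ring_scope.

Definition rel_of (A : Type) := A -> A -> Prop.

Definition is_congruence (A : comNzSemiRingType) (rho : rel_of A) : Prop :=
  (forall a, rho a a) /\
  (forall a b, rho a b -> rho b a) /\
  (forall a b c, rho a b -> rho b c -> rho a c) /\
  (forall a b c d, rho a b -> rho c d -> rho (a + c) (b + d)) /\
  (forall a b c d, rho a b -> rho c d -> rho (a * c) (b * d)).

Definition tw (A : comNzSemiRingType) (p q : A * A) : A * A :=
  (p.1 * q.1 + p.2 * q.2, p.1 * q.2 + p.2 * q.1).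

(* Twisted power p^{*n} for n >= 1: p^{*1} = p, p^{*n} = p^{*(n-1)} * p.
   The value at n = 0 is a junk value (p) never used, since sqrt_rel requires n >= 1. *)
Fixpoint twpow (A : comNzSemiRingType) (p : A * A) (n : nat) : A * A :=
  match n with
  | O => p
  | S O => p
  | S m => tw (twpow p m) p
  end.

Definition rel_plus (A : comNzSemiRingType) (R : rel_of A) : rel_of A :=
  fun a b => exists c, R (a + c) (b + c).

Definition sqrt_rel (A : comNzSemiRingType) (rho : rel_of A) : rel_of A :=
  fun a b => exists c : A, exists n : nat, (1 <= n)%N /\
    let p := twpow (a + c, b + c) n in rho p.1 p.2.

(** The key fact is a twisted binomial theorem:
    if [p^n] and [q^m] lie in [rho], so does [(p + q)^(n + m)], because every
    term of the expansion contains [p^a] with [a >= n] or [q^b] with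
    [b >= m].  Transitivity and compatibility with [+] and [*] of
    [sqrt rho] follow by adding suitable pairs, symmetry because swapping
    coordinates commutes with twisted powers up to a swap, and
    [(sqrt rho)_+ = sqrt rho] because the shift [c] is already built into
    [sqrt rho]. *)

From mathcomp Require Import all_boot all_algebra.
From mathcomp Require Import ring zify.
Import GRing.Theory.
Set Implicit Arguments.
Local Open Scope ring_scope.

Section TwistedProduct.
Variable A : comNzSemiRingType.
Implicit Types p q r : A * A.

Definition twexp p (k : nat) : A * A := iter k (fun r => tw r p) (1, 0).
Definition pair_add p q : A * A := (p.1 + q.1, p.2 + q.2).
Definition pair_swap p : A * A := (p.2, p.1).

Lemma twC p q : tw p q = tw q p.
Proof. by rewrite /tw /=; congr (_, _); ring. Qed.

Lemma twA p q r : tw p (tw q r) = tw (tw p q) r.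
Proof. by rewrite /tw /=; congr (_, _); ring. Qed.

Lemma tw1 p : tw (1, 0) p = p.
Proof. by case: p => x y; rewrite /tw /= !mul1r !mul0r !addr0. Qed.

Lemma twDl p q r : tw (pair_add p q) r = pair_add (tw p r) (tw q r).
Proof. by rewrite /tw /pair_add /=; congr (_, _); ring. Qed.

Lemma twexpS p k : twexp p k.+1 = tw (twexp p k) p.
Proof. by []. Qed.

Lemma twexpD p m n : twexp p (m + n) = tw (twexp p m) (twexp p n).
Proof.
elim: n => [|n IHn]; first by rewrite addn0 twC tw1.
by rewrite addnS !twexpS IHn twA.
Qed.

Lemma twexpMn p q k : twexp (tw p q) k = tw (twexp p k) (twexp q k).
Proof.
elim: k => [|k IHk]; first by rewrite /= tw1.
by rewrite !twexpS IHk /tw /=; congr (_, _); ring.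
Qed.

Lemma twexp_swap p k :
  twexp (pair_swap p) k = if odd k then pair_swap (twexp p k) else twexp p k.
Proof.
elim: k => [|k IHk] //=.
by rewrite IHk; case: (odd k); rewrite /tw /pair_swap /=; congr (_, _); ring.
Qed.

Lemma twpowE p n : (0 < n)%N -> twpow p n = twexp p n.
Proof.
case: n => // n _; elim: n => [|n IHn]; first by rewrite /= tw1.
by rewrite twexpS -IHn.
Qed.

(* Pascal's rule for the twisted binomial expansion of [(p + q)^(c + 1)]. *)
Lemma twexp_pascal p q a b c :
  tw (tw (twexp p a) (twexp q b)) (twexp (pair_add p q) c.+1) =
  pair_add (tw (tw (twexp p a.+1) (twexp q b)) (twexp (pair_add p q) c))
           (tw (tw (twexp p a) (twexp q b.+1)) (twexp (pair_add p q) c)).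
Proof.
rewrite twexpS [tw (twexp _ c) _]twC twA [tw _ (pair_add p q)]twC twDl -!twDl.
by congr tw; rewrite !twexpS /tw /pair_add /=; congr (_, _); ring.
Qed.

Variable rho : rel_of A.
Hypothesis rho_cong : is_congruence rho.

Definition pair_rel r : Prop := rho r.1 r.2.

Lemma pair_rel_tw r s : pair_rel r -> pair_rel (tw r s).
Proof.
case: rho_cong => refl [sym [_ [add mul]]] rr; rewrite /pair_rel /tw /=.
rewrite [_ * s.2 + _]addrC.
exact: add (mul _ _ _ _ rr (refl s.1)) (sym _ _ (mul _ _ _ _ rr (refl s.2))).
Qed.

Lemma pair_rel_add r s : pair_rel r -> pair_rel s -> pair_rel (pair_add r s).
Proof. by case: rho_cong => _ [_ [_ [add _]]]; apply: add. Qed.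

Lemma pair_rel_swap r : pair_rel r -> pair_rel (pair_swap r).
Proof. by case: rho_cong => _ [sym _]; apply: sym. Qed.

Lemma pair_rel_twexp_le p m n :
  (m <= n)%N -> pair_rel (twexp p m) -> pair_rel (twexp p n).
Proof. by move=> /subnK <- rp; rewrite addnC twexpD; apply: pair_rel_tw. Qed.

Lemma pair_rel_twexpMl p s n :
  pair_rel (twexp p n) -> pair_rel (twexp (tw s p) n).
Proof. by move=> rp; rewrite twexpMn twC; apply: pair_rel_tw. Qed.

Lemma pair_rel_twexp_add p q m n :
  pair_rel (twexp p m) -> pair_rel (twexp q n) ->
  pair_rel (twexp (pair_add p q) (m + n)).
Proof.
move=> rp rq.
suff expand c a b : (m + n <= a + b + c)%N ->
    pair_rel (tw (tw (twexp p a) (twexp q b)) (twexp (pair_add p q) c)).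
  by move: (expand (m + n)%N 0%N 0%N); rewrite /= !tw1; apply.
elim: c a b => [|c IHc] a b le_mn_abc; last first.
  by rewrite twexp_pascal; apply: pair_rel_add; apply: IHc; lia.
rewrite /= twC tw1.
have [le_ma | lt_am] := leqP m a.
  by apply: pair_rel_tw; apply: pair_rel_twexp_le rp.
have le_nb : (n <= b)%N by lia.
by rewrite twC; apply: pair_rel_tw; apply: pair_rel_twexp_le rq.
Qed.

End TwistedProduct.

Arguments pair_rel {A} rho r.
Arguments twexp {A} p k.
Arguments pair_add {A} p q.
Arguments pair_swap {A} p.

Lemma sqrt_relE (A : comNzSemiRingType) (rho : rel_of A) a b :
  sqrt_rel rho a b <-> exists c n, pair_rel rho (twexp (a + c, b + c) n.+1).
Proof.
split=> [[c [n [n_gt0 rn]]] | [c [n rn]]].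
  by exists c, n.-1; rewrite prednK // /pair_rel -twpowE.
by exists c, n.+1; rewrite twpowE.
Qed.

Section SqrtRel.
Variable A : comNzSemiRingType.
Variable rho : rel_of A.
Hypothesis rho_cong : is_congruence rho.

Lemma sqrt_rel_refl a : sqrt_rel rho a a.
Proof.
apply/sqrt_relE; exists 0, 0%N; rewrite /pair_rel /= /tw /=.
by case: rho_cong.
Qed.

Lemma sqrt_rel_sym a b : sqrt_rel rho a b -> sqrt_rel rho b a.
Proof.
move=> /sqrt_relE [c [n rn]]; apply/sqrt_relE; exists c, n.
rewrite -[(b + c, a + c)]/(pair_swap (a + c, b + c)) twexp_swap.
by case: (odd _) => //; apply: pair_rel_swap.
Qed.

Lemma sqrt_rel_trans a b e :
  sqrt_rel rho a b -> sqrt_rel rho b e -> sqrt_rel rho a e.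
Proof.
move=> /sqrt_relE [c [n rn]] /sqrt_relE [d [m rm]]; apply/sqrt_relE.
exists (b + c + d), (n.+1 + m)%N; rewrite -addnS.
have -> : (a + (b + c + d), e + (b + c + d)) = pair_add (a + c, b + c) (b + d, e + d).
  by rewrite /pair_add /=; congr (_, _); ring.
exact: pair_rel_twexp_add.
Qed.

Lemma sqrt_rel_add a b c d :
  sqrt_rel rho a b -> sqrt_rel rho c d -> sqrt_rel rho (a + c) (b + d).
Proof.
move=> /sqrt_relE [x [n rn]] /sqrt_relE [y [m rm]]; apply/sqrt_relE.
exists (x + y), (n.+1 + m)%N; rewrite -addnS.
have -> : (a + c + (x + y), b + d + (x + y)) = pair_add (a + x, b + x) (c + y, d + y).
  by rewrite /pair_add /=; congr (_, _); ring.
exact: pair_rel_twexp_add.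
Qed.

(* [c (a + x, b + x) + b (c + y, d + y)] is [(a c, b d)] shifted by
   [b c + c x + b y] in both coordinates. *)
Lemma sqrt_rel_mul a b c d :
  sqrt_rel rho a b -> sqrt_rel rho c d -> sqrt_rel rho (a * c) (b * d).
Proof.
move=> /sqrt_relE [x [n rn]] /sqrt_relE [y [m rm]]; apply/sqrt_relE.
exists (b * c + c * x + b * y), (n.+1 + m)%N; rewrite -addnS.
have -> : (a * c + (b * c + c * x + b * y), b * d + (b * c + c * x + b * y)) =
    pair_add (tw (c, 0) (a + x, b + x)) (tw (b, 0) (c + y, d + y)).
  by rewrite /pair_add /tw /=; congr (_, _); ring.
by apply: (pair_rel_twexp_add rho_cong); apply: (pair_rel_twexpMl rho_cong).
Qed.

Lemma sqrt_rel_plus a b : rel_plus (sqrt_rel rho) a b <-> sqrt_rel rho a b.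
Proof.
split=> [[c /sqrt_relE [d [n rn]]] | /sqrt_relE [d [n rn]]].
  by apply/sqrt_relE; exists (c + d), n; rewrite !addrA.
by exists 0; apply/sqrt_relE; exists d, n; rewrite !addr0.
Qed.

End SqrtRel.

Theorem proposition2p10 (A : comNzSemiRingType) (rho : A -> A -> Prop) :
  is_congruence rho ->
  is_congruence (sqrt_rel rho) /\
  (forall a b : A, rel_plus (sqrt_rel rho) a b <-> sqrt_rel rho a b).
Proof.
move=> rho_cong; split; last exact: sqrt_rel_plus.
split; first exact: sqrt_rel_refl.
split; first exact: sqrt_rel_sym.
split; first exact: sqrt_rel_trans.
split; first exact: sqrt_rel_add.
exact: sqrt_rel_mul.
Qed.
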